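(* For every $y\in\mathrm{Cay}$, $[y]=\mathcal{B}(\gamma(y))$. Moreover, for every permutation $\sigma$, $\mathcal{B}(\sigma)=[\sigma^{-1}]$.
   Context: $\mathrm{Cay}_n$ is the set of Cayley permutations of length $n$ (words of positive integers in which every integer from $1$ to the maximum occurs), $\mathrm{WI}_n$ its weakly increasing elements, $\mathrm{Cay}=\bigcup_n\mathrm{Cay}_n$. For $(u,v)\in\mathrm{WI}_n\times\mathrm{Cay}_n$, viewed as a biword with columns $\binom{u(i)}{v(i)}$, the Burge transpose $(u,v)^T$ turns every column $\binom{a}{b}$ into $\binom{b}{a}$ and sorts the columns increasingly by top entry, ties by decreasing bottom entry. For $x\in\mathrm{Cay}_n$, $\gamma(x)$ is the bottom row of $(1\,2\cdots n,\;x)^T$ (a permutation of $[n]$). $x\sim y$ iff $\gamma(x)=\gamma(y)$; $[y]$ is the class of $y$. For a permutation $\pi$ of $[n]$ with descent set $\mathrm{Des}(\pi)=\{i:\pi(i)>\pi(i+1)\}$, let $\mathrm{WI}(\pi)=\{u\in\mathrm{WI}_n:\mathrm{Des}(u)\subseteq\mathrm{Des}(\pi)\}$, where for weakly increasing $u$, $\mathrm{Des}(u)=\{i:u(i)=u(i+1)\}$. For $u\in\mathrm{WI}(\pi)$ the transpose $(u,\pi)^T$ has top row $1\,2\cdots n$; the Fishburn basis $\mathcal{B}(\pi)$ is the set of bottom rows of $(u,\pi)^T$ over all $u\in\mathrm{WI}(\pi)$. *)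

From mathcomp Require Import all_boot.
Set Implicit Arguments. Unset Strict Implicit. Unset Printing Implicit Defensive.

Definition wmax (w : seq nat) : nat := foldr maxn 0 w.

Definition is_cay (w : seq nat) : bool :=
  all (fun a => 0 < a) w && all (fun k => k \in w) (iota 1 (wmax w)).

Definition is_wi (u : seq nat) : bool := is_cay u && sorted leq u.

Definition is_perm (s : seq nat) : bool := perm_eq s (iota 1 (size s)).

Definition perm_inv (s : seq nat) : seq nat :=
  mkseq (fun i => (index i.+1 s).+1) (size s).

(* Biword columns (top, bottom). Order used by the Burge transpose:
   increasing top entry, ties by decreasing bottom entry. *)
Definition burge_le (c d : nat * nat) : bool :=
  (c.1 < d.1) || ((c.1 == d.1) && (d.2 <= c.2)).

Definition burge (u v : seq nat) : seq (nat * nat) :=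
  sort burge_le [seq (p.2, p.1) | p <- zip u v].

Definition bottom (b : seq (nat * nat)) : seq nat := [seq p.2 | p <- b].
Definition top (b : seq (nat * nat)) : seq nat := [seq p.1 | p <- b].

Definition gamma (x : seq nat) : seq nat := bottom (burge (iota 1 (size x)) x).

Definition cls (y : seq nat) (x : seq nat) : Prop := is_cay x /\ gamma x = gamma y.

(* Descent set of a permutation (0-based positions i with w_i > w_{i+1}). *)
Definition Des (w : seq nat) : seq nat :=
  [seq i <- iota 0 (size w).-1 | nth 0 w i.+1 < nth 0 w i].

Definition DesWI (u : seq nat) : seq nat :=
  [seq i <- iota 0 (size u).-1 | nth 0 u i == nth 0 u i.+1].

Definition WIof (pi u : seq nat) : bool :=
  is_wi u && (size u == size pi) && all (fun i => i \in Des pi) (DesWI u).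

Definition fishburn (pi : seq nat) (x : seq nat) : Prop :=
  exists u, WIof pi u /\ x = bottom (burge u pi).

From mathcomp Require Import all_boot zify.
Set Implicit Arguments. Unset Strict Implicit. Unset Printing Implicit Defensive.

(* The Burge transpose is an involution on biwords sorted for [burge_le]:
   transposing twice sorts the biword, and a sorted sequence is determined by
   its multiset.  For a permutation pi, the biword (u, pi) is sorted exactly
   when u lies in WI(pi), and the transpose of (1 2 ... n, x) is the sorted
   biword (sort x, gamma x).  Hence x ~ y iff (1 ... n, x) is the transpose of
   a sorted (u, gamma y), i.e. iff x lies in B(gamma y).  Finally
   (1 ... n, s) and (1 ... n, s^-1) are transposes of each other, so
   gamma (s^-1) = s and the second claim is the first one for y = s^-1. *)

Lemma burge_le_total : total burge_le.
Proof. by move=> [a b] [c d]; rewrite /burge_le /=; lia. Qed.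

Lemma burge_le_trans : transitive burge_le.
Proof. by move=> [a b] [c d] [e f]; rewrite /burge_le /=; lia. Qed.

Lemma burge_le_anti : antisymmetric burge_le.
Proof.
move=> [a b] [c d]; rewrite /burge_le /= => le_ab_cd.
by have [-> ->] : a = c /\ b = d by lia.
Qed.

Definition flip (L : seq (nat * nat)) : seq (nat * nat) :=
  [seq (p.2, p.1) | p <- L].

Definition btranspose (L : seq (nat * nat)) : seq (nat * nat) :=
  sort burge_le (flip L).

Lemma burgeE (u v : seq nat) : burge u v = btranspose (zip u v).
Proof. by []. Qed.

Lemma flipK : involutive flip.
Proof. by elim=> [|[a b] L IH] //=; rewrite IH. Qed.

Lemma top_flip (L : seq (nat * nat)) : top (flip L) = bottom L.
Proof. by elim: L => [|[a b] L IH] //=; rewrite IH. Qed.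

Lemma bottom_flip (L : seq (nat * nat)) : bottom (flip L) = top L.
Proof. by elim: L => [|[a b] L IH] //=; rewrite IH. Qed.

Lemma mem_flip (L : seq (nat * nat)) (a b : nat) :
  ((a, b) \in flip L) = ((b, a) \in L).
Proof.
elim: L => [|[c d] L IH] //=; rewrite !in_cons IH.
by rewrite !xpair_eqE andbC.
Qed.

Lemma top_zip (u v : seq nat) : size u = size v -> top (zip u v) = u.
Proof. by move=> eq_uv; apply: unzip1_zip; rewrite eq_uv. Qed.

Lemma bottom_zip (u v : seq nat) : size u = size v -> bottom (zip u v) = v.
Proof. by move=> eq_uv; apply: unzip2_zip; rewrite eq_uv. Qed.

Lemma zip_top_bottom (L : seq (nat * nat)) : zip (top L) (bottom L) = L.
Proof. exact: zip_unzip. Qed.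

Lemma sorted_top (L : seq (nat * nat)) : sorted burge_le L -> sorted leq (top L).
Proof. by apply: homo_sorted => [[a b] [c d]]; rewrite /burge_le /=; lia. Qed.

Lemma sorted_zip_ltn (u v : seq nat) : sorted ltn u -> sorted burge_le (zip u v).
Proof.
move=> /(sortedP 0) lt_u; apply/(sortedP (0, 0)) => i.
rewrite size_zip => lt_i; rewrite !nth_zip_cond size_zip !ifT; try lia.
by rewrite /burge_le /= [_ < _]lt_u //; lia.
Qed.

Lemma perm_btranspose (L : seq (nat * nat)) : perm_eq (btranspose L) (flip L).
Proof. by rewrite perm_sort. Qed.

Lemma sorted_btranspose (L : seq (nat * nat)) : sorted burge_le (btranspose L).
Proof. exact: sort_sorted burge_le_total _. Qed.

Lemma size_btranspose (L : seq (nat * nat)) : size (btranspose L) = size L.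
Proof. by rewrite (perm_size (perm_btranspose L)) size_map. Qed.

Lemma btransposeK (L : seq (nat * nat)) :
  sorted burge_le L -> btranspose (btranspose L) = L.
Proof.
move=> sorted_L; apply: (sorted_eq burge_le_trans burge_le_anti) => //.
  exact: sorted_btranspose.
rewrite perm_sort -{2}(flipK L).
exact/perm_map/perm_btranspose.
Qed.

Lemma perm_top_btranspose (L : seq (nat * nat)) :
  perm_eq (top (btranspose L)) (bottom L).
Proof. by rewrite -top_flip; apply/perm_map/perm_btranspose. Qed.

Lemma perm_bottom_btranspose (L : seq (nat * nat)) :
  perm_eq (bottom (btranspose L)) (top L).
Proof. by rewrite -bottom_flip; apply/perm_map/perm_btranspose. Qed.

Lemma top_btranspose_sorted (L : seq (nat * nat)) (s : seq nat) :
  sorted leq s -> perm_eq (bottom L) s -> top (btranspose L) = s.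
Proof.
move=> sorted_s perm_L; apply: (sorted_eq leq_trans anti_leq) => //.
- exact/sorted_top/sorted_btranspose.
- exact: perm_trans (perm_top_btranspose L) perm_L.
Qed.

Lemma is_cay_perm (s t : seq nat) : perm_eq s t -> is_cay s = is_cay t.
Proof.
have wmaxE w : wmax w = \max_(i <- w) i.
  by elim: w => [|a w IH]; rewrite ?big_nil ?big_cons //= IH.
move=> perm_st; rewrite /is_cay (perm_all _ perm_st) !wmaxE (perm_big _ perm_st).
by congr (_ && _); apply: eq_all => k; apply: perm_mem.
Qed.

Lemma is_cay_iota n : is_cay (iota 1 n).
Proof.
have wmax_iota m k : wmax (iota m k.+1) = m + k.
  by elim: k m => [|k IH] m /=; [lia | move: (IH m.+1) => /= ->; lia].
apply/andP; split; first by apply/allP => k; rewrite mem_iota; lia.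
by case: n => [|n] //; rewrite wmax_iota; apply/allP => k; rewrite !mem_iota.
Qed.

Lemma gammaE (x : seq nat) :
  gamma x = bottom (btranspose (zip (iota 1 (size x)) x)).
Proof. by []. Qed.

Lemma perm_gamma (x : seq nat) : perm_eq (gamma x) (iota 1 (size x)).
Proof.
rewrite gammaE; have := perm_bottom_btranspose (zip (iota 1 (size x)) x).
by rewrite top_zip // size_iota.
Qed.

Lemma size_gamma (x : seq nat) : size (gamma x) = size x.
Proof. by rewrite (perm_size (perm_gamma x)) size_iota. Qed.

Lemma is_perm_uniq (s : seq nat) : is_perm s -> uniq s.
Proof. by move/perm_uniq => ->; apply: iota_uniq. Qed.

Lemma is_perm_gamma (x : seq nat) : is_perm (gamma x).
Proof. by rewrite /is_perm size_gamma perm_gamma. Qed.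

Lemma WIofE (pi u : seq nat) : uniq pi ->
  WIof pi u = [&& is_cay u, size u == size pi & sorted burge_le (zip u pi)].
Proof.
move=> uniq_pi; apply/idP/idP.
- case/andP=> /andP[/andP[-> sorted_u] /eqP eq_size] /allP desWI_des.
  rewrite eq_size eqxx /=; apply/(sortedP (0, 0)) => i.
  rewrite size_zip eq_size minnn => lt_i; rewrite !nth_zip // /burge_le /=.
  have le_ui : nth 0 u i <= nth 0 u i.+1 by apply: (sortedP 0 sorted_u); lia.
  rewrite leq_eqVlt in le_ui; case/orP: le_ui => [/eqP eq_ui | -> //].
  have : i \in DesWI u by rewrite mem_filter mem_iota eq_ui eqxx /=; lia.
  by move/desWI_des; rewrite mem_filter eq_ui ltnn eqxx /= => /andP[/ltnW].
- case/and3P=> cay_u /eqP eq_size sorted_zip.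
  rewrite /WIof /is_wi cay_u eq_size eqxx /=.
  move: (sorted_top sorted_zip); rewrite top_zip // => -> /=.
  apply/allP => i; rewrite !mem_filter !mem_iota eq_size => /andP[/eqP eq_ui lt_i].
  rewrite lt_i andbT.
  have lt_Si : i.+1 < size pi by lia.
  move: (sortedP (0, 0) sorted_zip i); rewrite size_zip eq_size minnn.
  rewrite !nth_zip // /burge_le /= eq_ui ltnn eqxx /= => /(_ lt_Si) le_pi.
  by rewrite ltn_neqAle le_pi andbT (nth_uniq 0 lt_Si (ltnW lt_Si) uniq_pi) gtn_eqF.
Qed.

Lemma fishburn_gamma (x : seq nat) : is_cay x -> fishburn (gamma x) x.
Proof.
move=> cay_x; set L := zip (iota 1 (size x)) x.
have sorted_L : sorted burge_le L by apply/sorted_zip_ltn/iota_ltn_sorted.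
have size_L : size L = size x by rewrite size_zip size_iota minnn.
exists (top (btranspose L)); split.
- have perm_top : perm_eq (top (btranspose L)) x.
    by move: (perm_top_btranspose L); rewrite bottom_zip // size_iota.
  rewrite WIofE; last exact/is_perm_uniq/is_perm_gamma.
  rewrite (is_cay_perm perm_top) cay_x (perm_size perm_top) size_gamma eqxx /=.
  by rewrite gammaE zip_top_bottom; apply: sorted_btranspose.
- by rewrite burgeE gammaE zip_top_bottom btransposeK // bottom_zip // size_iota.
Qed.

Lemma fishburn_cay_gamma (pi u : seq nat) : is_perm pi -> WIof pi u ->
  is_cay (bottom (burge u pi)) /\ gamma (bottom (burge u pi)) = pi.
Proof.
move=> perm_pi; rewrite WIofE ?is_perm_uniq // => /and3P[cay_u /eqP eq_size sorted_zip].
rewrite burgeE; set T := btranspose (zip u pi).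
have top_T : top T = iota 1 (size pi).
  by apply: top_btranspose_sorted; rewrite ?iota_sorted ?bottom_zip.
have size_T : size (bottom T) = size pi.
  by rewrite size_map size_btranspose size_zip eq_size minnn.
split.
- by rewrite (is_cay_perm (perm_bottom_btranspose _)) top_zip.
- by rewrite gammaE size_T -top_T zip_top_bottom btransposeK // bottom_zip.
Qed.

Lemma cls_fishburn (y x : seq nat) : is_cay y -> cls y x <-> fishburn (gamma y) x.
Proof.
move=> cay_y; split.
- by case=> cay_x <-; apply: fishburn_gamma.
- case=> u [WI_u ->].
  by have [] := fishburn_cay_gamma (is_perm_gamma y) WI_u.
Qed.

Lemma mem_zip_iota (t : seq nat) (a b : nat) :
  ((a, b) \in zip (iota 1 (size t)) t) = (0 < a <= size t) && (nth 0 t a.-1 == b).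
Proof.
have size_zip_t : size (zip (iota 1 (size t)) t) = size t.
  by rewrite size_zip size_iota minnn.
apply/(nthP (0, 0))/idP.
- case=> i; rewrite size_zip_t => lt_i.
  by rewrite nth_zip ?size_iota // nth_iota // => -[<- <-]; rewrite eqxx andbT; lia.
- case/andP=> range_a /eqP <-; exists a.-1; first by rewrite size_zip_t; lia.
  by rewrite nth_zip ?size_iota // nth_iota; [congr pair; lia | lia].
Qed.

Lemma mem_zip_perm_inv (s : seq nat) (a b : nat) : is_perm s ->
  ((a, b) \in zip (iota 1 (size s)) (perm_inv s)) =
  ((b, a) \in zip (iota 1 (size s)) s).
Proof.
move=> perm_s; have uniq_s := is_perm_uniq perm_s.
have mem_s c : (c \in s) = (0 < c <= size s).
  by rewrite (perm_mem perm_s) mem_iota; lia.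
have size_p : size (perm_inv s) = size s by apply: size_mkseq.
rewrite -{1}size_p mem_zip_iota size_p mem_zip_iota /perm_inv; apply/idP/idP.
- case/andP=> range_a; rewrite nth_mkseq; last by lia.
  have a_in_s : a \in s by rewrite mem_s; lia.
  move/eqP=> <-; rewrite prednK; last by lia.
  by rewrite /= nth_index // eqxx index_mem a_in_s.
- case/andP=> /andP[pos_b le_b] /eqP nth_b.
  have lt_b : b.-1 < size s by lia.
  have range_a : 0 < a <= size s by rewrite -mem_s -nth_b (mem_nth 0 lt_b).
  rewrite range_a nth_mkseq; last by lia.
  rewrite prednK; last by lia.
  by rewrite /= -nth_b index_uniq // prednK.
Qed.

Lemma btranspose_zip_perm_inv (s : seq nat) : is_perm s ->
  btranspose (zip (iota 1 (size s)) (perm_inv s)) = zip (iota 1 (size s)) s.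
Proof.
move=> perm_s; set n := size s.
have uniq_zip_iota (t : seq nat) : size t = n -> uniq (zip (iota 1 n) t).
  move=> size_t; apply: (@map_uniq _ _ fst); change (uniq (top (zip (iota 1 n) t))).
  by rewrite top_zip ?size_iota ?iota_uniq.
apply: (sorted_eq burge_le_trans burge_le_anti).
- exact: sorted_btranspose.
- exact/sorted_zip_ltn/iota_ltn_sorted.
rewrite perm_sort perm_sym; apply: uniq_perm.
- exact: uniq_zip_iota.
- rewrite map_inj_uniq; first exact/uniq_zip_iota/size_mkseq.
  by move=> [a b] [c d] [-> ->].
- by move=> [a b]; rewrite mem_flip mem_zip_perm_inv.
Qed.

Lemma gamma_perm_inv (s : seq nat) : is_perm s -> gamma (perm_inv s) = s.
Proof.
move=> perm_s; rewrite gammaE size_mkseq btranspose_zip_perm_inv //.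
by rewrite bottom_zip // size_iota.
Qed.

Lemma is_cay_perm_inv (s : seq nat) : is_perm s -> is_cay (perm_inv s).
Proof.
move=> perm_s; have size_p : size (perm_inv s) = size s by apply: size_mkseq.
move: (perm_top_btranspose (zip (iota 1 (size s)) (perm_inv s))).
rewrite btranspose_zip_perm_inv // top_zip ?bottom_zip ?size_iota // perm_sym.
by move/is_cay_perm => ->; apply: is_cay_iota.
Qed.

Theorem lemma4p10 :
  (forall y : seq nat, is_cay y ->
     forall x : seq nat, cls y x <-> fishburn (gamma y) x) /\
  (forall s : seq nat, is_perm s ->
     forall x : seq nat, fishburn s x <-> cls (perm_inv s) x).
Proof.
split=> [y cay_y x | s perm_s x]; first exact: cls_fishburn.
rewrite -{1}(gamma_perm_inv perm_s).
by symmetry; apply: cls_fishburn; apply: is_cay_perm_inv.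
Qed.
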